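(* Let $X$ be a simplicial set. For any pair of morphisms $(Y',\rho')\xrightarrow{f}(Y,\rho)\xleftarrow{g}(Y'',\rho'')$ in $\mathrm{Comod}_{X_+}$, the pullback $(Y',\rho')\times_{(Y,\rho)}(Y'',\rho'')$ exists in $\mathrm{Comod}_{X_+}$ and there is an isomorphism of right $X_+$-comodules $$(Y',\rho')\times_{(Y,\rho)}(Y'',\rho'')\cong\Big(\big((Y',\rho')\star X\big)\times_{(Y,\rho)\star X}\big((Y'',\rho'')\star X\big)\Big)/X,$$ where the inner pullback is taken in $\mathcal R_X$ (equivalently, on underlying simplicial sets). In particular, if $g=F_{X_+}(h)$ for a pointed map $h:W''\to W$, then $$(Y',\rho')\times_{F_{X_+}W}F_{X_+}W''\cong\Big(\big((Y',\rho')\star X\big)\times_W W''\Big)/X,$$ where the pullback inside is computed in unpointed simplicial sets, using the map $(Y',\rho')\star X\to W$ given by the composite of the first projection $Y'\star X\to Y'$ (i.e. $(y,x)\mapsto y$), the underlying map of $f$, and the identification of the underlying simplicial set of $F_{X_+}W$ followed by collapsing.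
   Context: Notation as follows. For a simplicial set $X$, $X_+=X\sqcup\{+\}$, $\Delta_X$ is the diagonal, $\varepsilon:X_+\to S^0$ is induced by $X\to *$. A right $X_+$-comodule is a pointed simplicial set $Y$ with pointed $\rho:Y\to Y\wedge X_+$ satisfying $(\rho\wedge X_+)\rho=(Y\wedge(\Delta_X)_+)\rho$ and $(Y\wedge\varepsilon)\rho=\mathrm{id}$; morphisms commute with coactions; the category is $\mathrm{Comod}_{X_+}$. The cofree comodule functor is $F_{X_+}(W)=(W\wedge X_+,W\wedge(\Delta_X)_+)$, right adjoint to the forgetful functor. $\mathcal R_X$ is the category of retractive spaces $(Z,i,r)$ ($ri=\mathrm{id}_X$) over $X$. The functor $-/X:\mathcal R_X\to\mathrm{Comod}_{X_+}$ sends $(Z,i,r)$ to $Z/i(X)$ with coaction $[z]\mapsto[([z],r(z))]$; $(Y,\rho)\star X$ is the pullback in unpointed simplicial sets of $Y\xrightarrow{\rho}Y\wedge X_+\leftarrow Y\times X$, with $i(x)=(y_0,x)$ and $r(y,x)=x$. Note that $F_{X_+}(W)\star X\cong(W\times X, x\mapsto(w_0,x),\mathrm{proj}_2)$, so a map $(Y',\rho')\star X\to F_{X_+}(W)\star X$ in $\mathcal R_X$ has a first component $Y'\star X\to W$, which is the map used in the second formula. *)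

From Stdlib Require Import ClassicalEpsilon ProofIrrelevance.
From HB Require Import structures.
From mathcomp Require Import all_boot.

Set Implicit Arguments.
Unset Strict Implicit.
Unset Printing Implicit Defensive.

(* The simplex category: morphisms [m] -> [n] are monotone maps        *)
(* {0..m} -> {0..n}.                                                   *)

Definition monob m n (f : {ffun 'I_m.+1 -> 'I_n.+1}) : bool :=
  [forall i : 'I_m.+1, forall j : 'I_m.+1, (i <= j) ==> (f i <= f j)].

Definition dmap m n := {f : {ffun 'I_m.+1 -> 'I_n.+1} | monob f}.

Lemma did_mono n : monob [ffun i : 'I_n.+1 => i].
Proof.
by apply/forallP => i; apply/forallP => j; apply/implyP; rewrite !ffunE.
Qed.

Definition did n : dmap n n := exist (fun f => monob f) [ffun i : 'I_n.+1 => i] (did_mono n).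

Lemma dcomp_mono m n p (g : dmap n p) (f : dmap m n) :
  monob [ffun i => proj1_sig g (proj1_sig f i)].
Proof.
apply/forallP => i; apply/forallP => j; apply/implyP => hij; rewrite !ffunE.
have /forallP/(_ i)/forallP/(_ j)/implyP hf := proj2_sig f.
have /forallP/(_ (proj1_sig f i))/forallP/(_ (proj1_sig f j))/implyP hg :=
  proj2_sig g.
exact: hg (hf hij).
Qed.

Definition dcomp m n p (g : dmap n p) (f : dmap m n) : dmap m p :=
  exist (fun h => monob h) [ffun i => proj1_sig g (proj1_sig f i)] (dcomp_mono g f).

Unset Implicit Arguments.
Record sSet := SSet {
  sob :> nat -> Type;
  sact : forall m n, dmap m n -> sob n -> sob m;
  sact_id : forall n (x : sob n), sact n n (did n) x = x;
  sact_comp : forall m n p (f : dmap m n) (g : dmap n p) (x : sob p),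
      sact m p (dcomp g f) x = sact m n f (sact n p g x) }.
Arguments sact {s m n}.

Record smap (X Y : sSet) := SMap {
  sfun :> forall n, X n -> Y n;
  sfun_nat : forall m n (f : dmap m n) (x : X n),
      sfun m (sact f x) = sact f (sfun n x) }.
Arguments SMap {X Y}.
Arguments sfun_nat {X Y} s {m n} f x.
Arguments sfun {X Y} s n.

Record psSet := PSSet {
  pss :> sSet;
  pt : forall n, pss n;
  pt_nat : forall m n (f : dmap m n), sact f (pt n) = pt m }.
Arguments PSSet : clear implicits.
Arguments pt {p} n.
Set Implicit Arguments.

Record psmap (X Y : psSet) := PSMap {
  psm :> smap X Y;
  psm_pt : forall n, psm n (pt n) = pt n }.
Arguments PSMap {X Y}.

Lemma sig_eqP (T : Type) (P : T -> Prop) (x y : {t | P t}) :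
  proj1_sig x = proj1_sig y -> x = y.
Proof.
case: x => a ha; case: y => b hb /= e; subst b.
by rewrite (proof_irrelevance _ ha hb).
Qed.

Definition prod_act (X Y : sSet) m n (f : dmap m n) (p : X n * Y n) :
  X m * Y m := (sact f p.1, sact f p.2).

Lemma prod_act_id (X Y : sSet) n (p : X n * Y n) : prod_act (did n) p = p.
Proof. by case: p => a b; rewrite /prod_act /= !sact_id. Qed.

Lemma prod_act_comp (X Y : sSet) m n p (f : dmap m n) (g : dmap n p)
  (x : X p * Y p) : prod_act (dcomp g f) x = prod_act f (prod_act g x).
Proof. by rewrite /prod_act /= !sact_comp. Qed.

Definition prodS (X Y : sSet) : sSet :=
  @SSet (fun n => (X n * Y n)%type) (@prod_act X Y) (@prod_act_id X Y)
        (@prod_act_comp X Y).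

Definition sndS (W X : sSet) : smap (prodS W X) X :=
  @SMap (prodS W X) X (fun n p => p.2) (fun _ _ _ _ => erefl).

Definition pb_ob (A B C : sSet) (f : smap A C) (g : smap B C) n :=
  {p : A n * B n | f n p.1 = g n p.2}.

Lemma pb_act_ok (A B C : sSet) (f : smap A C) (g : smap B C) m n
  (phi : dmap m n) (p : pb_ob f g n) :
  f m (sact phi (proj1_sig p).1) = g m (sact phi (proj1_sig p).2).
Proof. by rewrite !sfun_nat (proj2_sig p). Qed.

Definition pb_act (A B C : sSet) (f : smap A C) (g : smap B C) m n
  (phi : dmap m n) (p : pb_ob f g n) : pb_ob f g m :=
  exist _ (sact phi (proj1_sig p).1, sact phi (proj1_sig p).2)
          (pb_act_ok phi p).

Lemma pb_act_id (A B C : sSet) (f : smap A C) (g : smap B C) n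
  (p : pb_ob f g n) : pb_act (did n) p = p.
Proof. by apply: sig_eqP; case: p => [[a b] h] /=; rewrite !sact_id. Qed.

Lemma pb_act_comp (A B C : sSet) (f : smap A C) (g : smap B C) m n q
  (phi : dmap m n) (psi : dmap n q) (p : pb_ob f g q) :
  pb_act (dcomp psi phi) p = pb_act phi (pb_act psi p).
Proof. by apply: sig_eqP; case: p => [[a b] h] /=; rewrite !sact_comp. Qed.

Definition pbS (A B C : sSet) (f : smap A C) (g : smap B C) : sSet :=
  @SSet (pb_ob f g) (@pb_act A B C f g) (@pb_act_id A B C f g)
        (@pb_act_comp A B C f g).

(* Z/A is represented as  option {z | z \notin A},  None = the class    *)
(* of A (the basepoint); for A empty this is Z_+.                      *)

Definition qob (Z : sSet) (A : forall n, Z n -> Prop) n :=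
  option {z : Z n | ~ A n z}.

Definition qproj (Z : sSet) (A : forall n, Z n -> Prop) n (z : Z n) :
  qob A n :=
  match excluded_middle_informative (A n z) with
  | left _ => None
  | right h => Some (exist _ z h)
  end.

Definition qact (Z : sSet) (A : forall n, Z n -> Prop) m n (f : dmap m n)
  (q : qob A n) : qob A m :=
  match q with None => None | Some z => qproj A (sact f (proj1_sig z)) end.

Lemma qprojA (Z : sSet) (A : forall n, Z n -> Prop) n (z : Z n) :
  A n z -> qproj A z = None.
Proof. by rewrite /qproj; case: excluded_middle_informative. Qed.

Lemma qprojN (Z : sSet) (A : forall n, Z n -> Prop) n (z : Z n)
  (h : ~ A n z) : qproj A z = Some (exist _ z h).
Proof.
rewrite /qproj; case: excluded_middle_informative => [a|h'].
  by case: (h a).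
by rewrite (proof_irrelevance _ h h').
Qed.

Definition sclosed (Z : sSet) (A : forall n, Z n -> Prop) :=
  forall m n (f : dmap m n) (z : Z n), A n z -> A m (sact f z).

Lemma qproj_nat (Z : sSet) (A : forall n, Z n -> Prop) (hA : sclosed A)
  m n (f : dmap m n) (z : Z n) :
  qproj A (sact f z) = qact f (qproj A z).
Proof.
case: (excluded_middle_informative (A n z)) => a.
  by rewrite (qprojA a) qprojA //; apply: hA.
by rewrite (qprojN a).
Qed.

Lemma qact_id (Z : sSet) (A : forall n, Z n -> Prop) n (q : qob A n) :
  qact (did n) q = q.
Proof. by case: q => [[z h]|] //=; rewrite sact_id; apply: qprojN. Qed.

Lemma qact_comp (Z : sSet) (A : forall n, Z n -> Prop) (hA : sclosed A)
  m n p (f : dmap m n) (g : dmap n p) (q : qob A p) :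
  qact (dcomp g f) q = qact f (qact g q).
Proof. by case: q => [[z h]|] //=; rewrite sact_comp qproj_nat. Qed.

Definition quotS (Z : sSet) (A : forall n, Z n -> Prop) (hA : sclosed A)
  : psSet :=
  @PSSet (@SSet (qob A) (@qact Z A) (@qact_id Z A) (@qact_comp Z A hA))
         (fun n => None) (fun _ _ _ => erefl).

Definition qprojS (Z : sSet) (A : forall n, Z n -> Prop) (hA : sclosed A) :
  smap Z (quotS hA) := @SMap Z (quotS hA) (@qproj Z A) (@qproj_nat Z A hA).

Definition qmap (Z Z' : sSet) (A : forall n, Z n -> Prop)
  (A' : forall n, Z' n -> Prop) (phi : smap Z Z') n (q : qob A n) :
  qob A' n :=
  match q with None => None | Some z => qproj A' (phi n (proj1_sig z)) end.

Lemma qmap_nat (Z Z' : sSet) (A : forall n, Z n -> Prop)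
  (A' : forall n, Z' n -> Prop) (hA : sclosed A) (hA' : sclosed A')
  (phi : smap Z Z') (hphi : forall n z, A n z -> A' n (phi n z))
  m n (f : dmap m n) (q : qob A n) :
  qmap A' phi (qact f q) = qact f (qmap A' phi q).
Proof.
case: q => [[z h]|] //=.
rewrite -(qproj_nat hA') -sfun_nat.
case: (excluded_middle_informative (A m (sact f z))) => a.
  by rewrite (qprojA a) /= qprojA //; apply: hphi.
by rewrite (qprojN a).
Qed.

Definition qmapS (Z Z' : sSet) (A : forall n, Z n -> Prop)
  (A' : forall n, Z' n -> Prop) (hA : sclosed A) (hA' : sclosed A')
  (phi : smap Z Z') (hphi : forall n z, A n z -> A' n (phi n z)) :
  psmap (quotS hA) (quotS hA') :=
  @PSMap (quotS hA) (quotS hA')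
    (@SMap (quotS hA) (quotS hA') (@qmap Z Z' A A' phi)
       (@qmap_nat Z Z' A A' hA hA' phi hphi))
    (fun _ => erefl).

(* Y /\ X_+ = (Y x X_+)/(Y v X_+) is identified with (Y x X)/({y0} x X). *)

Definition smashA (Y : psSet) (X : sSet) n (p : prodS Y X n) : Prop :=
  p.1 = pt n.

Lemma smashA_closed (Y : psSet) (X : sSet) : sclosed (@smashA Y X).
Proof. by move=> m n f [y x]; rewrite /smashA /= => ->; apply: pt_nat. Qed.

Definition smash (Y : psSet) (X : sSet) : psSet :=
  quotS (@smashA_closed Y X).

Definition sm_inS (Y : psSet) (X : sSet) : smap (prodS Y X) (smash Y X) :=
  qprojS (@smashA_closed Y X).

(* Y /\ eps : Y /\ X_+ -> Y /\ S^0 = Y,  [y,x] |-> y *)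
Definition sm_counit_fun (W : psSet) (X : sSet) n (s : smash W X n) : W n :=
  match s with None => pt n | Some p => (proj1_sig p).1 end.

Lemma sm_counit_nat (W : psSet) (X : sSet) m n (f : dmap m n)
  (s : smash W X n) :
  sm_counit_fun (sact f s) = sact f (sm_counit_fun s).
Proof.
case: s => [[[w x] h]|] /=; last by rewrite pt_nat.
case: (excluded_middle_informative (smashA (sact f w, sact f x))) => a.
  by rewrite /qact /= (qprojA a) /=; rewrite /smashA /= in a; rewrite a.
by rewrite /qact /= (qprojN a).
Qed.

Definition sm_counit (W : psSet) (X : sSet) : smap (smash W X) W :=
  @SMap (smash W X) W (@sm_counit_fun W X) (@sm_counit_nat W X).

Definition smf (Y Y' : psSet) (X : sSet) (phi : forall n, Y n -> Y' n) n
  (s : smash Y X n) : smash Y' X n :=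
  match s with
  | None => None
  | Some p => qproj (@smashA Y' X) (phi n (proj1_sig p).1, (proj1_sig p).2)
  end.

(* Y /\ (Delta_X)_+ followed by Y /\ (X_+ /\ X_+) = (Y /\ X_+) /\ X_+ :
   [y,x] |-> [[y,x],x] *)
Definition sm_diag (Y : psSet) (X : sSet) n (s : smash Y X n) :
  smash (smash Y X) X n :=
  match s with
  | None => None
  | Some p => qproj (@smashA (smash Y X) X) (Some p, (proj1_sig p).2)
  end.

Record comod (X : sSet) := Comod {
  cY :> psSet;
  coact : smap cY (smash cY X);
  coact_pt : forall n, coact n (pt n) = pt n }.
Arguments coact {X} c.

Definition is_comod (X : sSet) (C : comod X) : Prop :=
  (forall n (y : C n), sm_counit C X n (coact C n y) = y) /\
  (forall n (y : C n),
      smf (coact C) (coact C n y) = sm_diag (coact C n y)).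

Definition is_chom (X : sSet) (C D : comod X) (phi : psmap C D) : Prop :=
  forall n (y : C n), coact D n (phi n y) = smf phi (coact C n y).

Definition is_comod_pullback (X : sSet) (C' C C'' : comod X)
  (f : psmap C' C) (g : psmap C'' C)
  (P : comod X) (p1 : psmap P C') (p2 : psmap P C'') : Prop :=
  [/\ is_comod P, is_chom p1, is_chom p2,
      (forall n (z : P n), f n (p1 n z) = g n (p2 n z)) &
      forall (T : comod X) (t1 : psmap T C') (t2 : psmap T C''),
        is_comod T -> is_chom t1 -> is_chom t2 ->
        (forall n (z : T n), f n (t1 n z) = g n (t2 n z)) ->
        exists u : psmap T P,
          [/\ is_chom u,
              (forall n (z : T n), p1 n (u n z) = t1 n z),
              (forall n (z : T n), p2 n (u n z) = t2 n z) &
              forall u' : psmap T P, is_chom u' ->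
                (forall n (z : T n), p1 n (u' n z) = t1 n z) ->
                (forall n (z : T n), p2 n (u' n z) = t2 n z) ->
                forall n (z : T n), u' n z = u n z]].

Definition comod_iso (X : sSet) (P Q : comod X) : Prop :=
  exists (phi : psmap P Q) (psi : psmap Q P),
    [/\ is_chom phi, is_chom psi,
        (forall n (z : P n), psi n (phi n z) = z) &
        (forall n (z : Q n), phi n (psi n z) = z)].

Definition gco_fun (X Z : sSet) (A : forall n, Z n -> Prop) (hA : sclosed A)
  (r : smap Z X) n (z : Z n) : prodS (quotS hA) X n := (qproj A z, r n z).

Lemma gco_nat (X Z : sSet) (A : forall n, Z n -> Prop) (hA : sclosed A)
  (r : smap Z X) m n (f : dmap m n) (z : Z n) :
  gco_fun hA r (sact f z) = sact f (gco_fun hA r z).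
Proof. by rewrite /gco_fun (qproj_nat hA) sfun_nat. Qed.

Lemma gco_pt (X Z : sSet) (A : forall n, Z n -> Prop) (hA : sclosed A)
  (r : smap Z X) n (z : Z n) :
  A n z -> @smashA (quotS hA) X n (gco_fun hA r z).
Proof. by move=> a; rewrite /smashA /gco_fun /= qprojA. Qed.

Definition gcoact (X Z : sSet) (A : forall n, Z n -> Prop) (hA : sclosed A)
  (r : smap Z X) : smap (quotS hA) (smash (quotS hA) X) :=
  @qmapS Z (prodS (quotS hA) X) A (@smashA (quotS hA) X) hA
        (@smashA_closed (quotS hA) X)
        (@SMap _ _ (gco_fun hA r) (gco_nat hA r)) (@gco_pt X Z A hA r).

Record rspace (X : sSet) := RSpace {
  rZ :> sSet;
  rin : smap X rZ;
  rret : smap rZ X }.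
Arguments rin {X} r.
Arguments rret {X} r.

Definition imgA (X : sSet) (R : rspace X) n (z : R n) : Prop :=
  exists x, rin R n x = z.

Lemma imgA_closed (X : sSet) (R : rspace X) : sclosed (@imgA X R).
Proof. by move=> m n f z [x <-]; exists (sact f x); apply: sfun_nat. Qed.

(* (Z,i,r) |-> Z/i(X) with coaction [z] |-> [([z], r z)] *)
Definition modX (X : sSet) (R : rspace X) : comod X :=
  @Comod X (quotS (@imgA_closed X R)) (@gcoact X R (@imgA X R) (@imgA_closed X R) (rret R)) (fun _ => erefl).

(* F_{X_+}(W) = (W /\ X_+, W /\ (Delta_X)_+) *)
Definition cofree (X : sSet) (W : psSet) : comod X :=
  @Comod X (smash W X) (@gcoact X (prodS W X) (@smashA W X) (@smashA_closed W X) (sndS W X)) (fun _ => erefl).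

Definition prodmapS (W W' X : sSet) (h : smap W W') :
  smap (prodS W X) (prodS W' X) :=
  @SMap (prodS W X) (prodS W' X) (fun n p => (h n p.1, p.2))
     (fun m n f p => f_equal (fun a => (a, _)) (sfun_nat h f p.1)).

Lemma prodmap_pt (W W' : psSet) (X : sSet) (h : psmap W W') n
  (p : prodS W X n) : smashA p -> smashA (prodmapS X h n p).
Proof. by rewrite /smashA /= => ->; apply: psm_pt. Qed.

Definition cofree_map (X : sSet) (W'' W : psSet) (h : psmap W'' W) :
  psmap (cofree X W'') (cofree X W) :=
  @qmapS (prodS W'' X) (prodS W X) (@smashA W'' X) (@smashA W X)
    (@smashA_closed W'' X) (@smashA_closed W X)
    (prodmapS X h) (@prodmap_pt W'' W X h).

Definition starS (X : sSet) (C : comod X) : sSet :=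
  pbS (coact C) (sm_inS C X).

Lemma istar_ok (X : sSet) (C : comod X) n (x : X n) :
  coact C n (pt n) = sm_inS C X n (pt n, x).
Proof. by rewrite coact_pt /=; rewrite qprojA. Qed.

Definition istar_fun (X : sSet) (C : comod X) n (x : X n) : starS C n :=
  exist _ (pt n, (pt n, x)) (istar_ok C x).

Lemma istar_nat (X : sSet) (C : comod X) m n (f : dmap m n) (x : X n) :
  istar_fun C (sact f x) = sact f (istar_fun C x).
Proof. by apply: sig_eqP => /=; rewrite /prod_act /= pt_nat. Qed.

Definition istar (X : sSet) (C : comod X) : smap X (starS C) :=
  @SMap X (starS C) (@istar_fun X C) (@istar_nat X C).

Definition rstar (X : sSet) (C : comod X) : smap (starS C) X :=
  @SMap (starS C) X (fun n p => (proj1_sig p).2.2) (fun _ _ _ _ => erefl).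

Definition pstar (X : sSet) (C : comod X) : smap (starS C) C :=
  @SMap (starS C) C (fun n p => (proj1_sig p).1) (fun _ _ _ _ => erefl).

Definition star (X : sSet) (C : comod X) : rspace X :=
  @RSpace X (starS C) (istar C) (rstar C).

(* f * X : Y' * X -> Y * X, as a map into the ambient Y x (Y x X) *)
Definition starfun_fun (X : sSet) (C' C : comod X) (f : psmap C' C) n
  (p : starS C' n) : prodS C (prodS C X) n :=
  (f n (proj1_sig p).1, (f n (proj1_sig p).2.1, (proj1_sig p).2.2)).

Lemma starfun_nat (X : sSet) (C' C : comod X) (f : psmap C' C)
  m n (phi : dmap m n) (p : starS C' n) :
  starfun_fun f (sact phi p) = sact phi (starfun_fun f p).
Proof. by rewrite /starfun_fun /= /prod_act /= !sfun_nat. Qed.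

Definition starfun (X : sSet) (C' C : comod X) (f : psmap C' C) :
  smap (starS C') (prodS C (prodS C X)) :=
  @SMap (starS C') (prodS C (prodS C X)) (@starfun_fun X C' C f)
        (@starfun_nat X C' C f).

Definition innerS (X : sSet) (C' C C'' : comod X) (f : psmap C' C)
  (g : psmap C'' C) : sSet := pbS (starfun f) (starfun g).

Lemma inner_i_ok (X : sSet) (C' C C'' : comod X) (f : psmap C' C)
  (g : psmap C'' C) n (x : X n) :
  starfun f n (istar C' n x) = starfun g n (istar C'' n x).
Proof. by rewrite /= /starfun_fun /= !psm_pt. Qed.

Definition inner_i_fun (X : sSet) (C' C C'' : comod X) (f : psmap C' C)
  (g : psmap C'' C) n (x : X n) : innerS f g n :=
  exist _ (istar C' n x, istar C'' n x) (inner_i_ok f g x).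

Lemma inner_i_nat (X : sSet) (C' C C'' : comod X) (f : psmap C' C)
  (g : psmap C'' C) m n (phi : dmap m n) (x : X n) :
  inner_i_fun f g (sact phi x) = sact phi (inner_i_fun f g x).
Proof. by apply: sig_eqP => /=; rewrite !istar_nat. Qed.

Definition inner_r_fun (X : sSet) (C' C C'' : comod X) (f : psmap C' C)
  (g : psmap C'' C) n (p : innerS f g n) : X n :=
  rstar C' n (proj1_sig p).1.

Definition innerR (X : sSet) (C' C C'' : comod X) (f : psmap C' C)
  (g : psmap C'' C) : rspace X :=
  @RSpace X (innerS f g)
    (@SMap X (innerS f g) (@inner_i_fun X C' C C'' f g)
       (@inner_i_nat X C' C C'' f g))
    (@SMap (innerS f g) X (@inner_r_fun X C' C C'' f g)
       (fun _ _ _ _ => erefl)).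

Definition wmap_fun (X : sSet) (C' : comod X) (W : psSet)
  (f : psmap C' (cofree X W)) n (p : starS C' n) : W n :=
  sm_counit W X n (f n (pstar C' n p)).

Lemma wmap_nat (X : sSet) (C' : comod X) (W : psSet)
  (f : psmap C' (cofree X W)) m n (phi : dmap m n) (p : starS C' n) :
  wmap_fun f (sact phi p) = sact phi (wmap_fun f p).
Proof. by rewrite /wmap_fun !sfun_nat. Qed.

Definition wmap (X : sSet) (C' : comod X) (W : psSet)
  (f : psmap C' (cofree X W)) : smap (starS C') W :=
  @SMap (starS C') W (@wmap_fun X C' W f) (@wmap_nat X C' W f).

Definition part2S (X : sSet) (C' : comod X) (W W'' : psSet)
  (f : psmap C' (cofree X W)) (h : psmap W'' W) : sSet := pbS (wmap f) h.

Lemma part2_i_ok (X : sSet) (C' : comod X) (W W'' : psSet)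
  (f : psmap C' (cofree X W)) (h : psmap W'' W) n (x : X n) :
  wmap f n (istar C' n x) = h n (pt n).
Proof. by rewrite psm_pt /= /wmap_fun /= psm_pt. Qed.

Definition part2_i_fun (X : sSet) (C' : comod X) (W W'' : psSet)
  (f : psmap C' (cofree X W)) (h : psmap W'' W) n (x : X n) :
  part2S f h n := exist _ (istar C' n x, pt n) (part2_i_ok f h x).

Lemma part2_i_nat (X : sSet) (C' : comod X) (W W'' : psSet)
  (f : psmap C' (cofree X W)) (h : psmap W'' W) m n (phi : dmap m n)
  (x : X n) :
  part2_i_fun f h (sact phi x) = sact phi (part2_i_fun f h x).
Proof. by apply: sig_eqP => /=; rewrite istar_nat pt_nat. Qed.

Definition part2_r_fun (X : sSet) (C' : comod X) (W W'' : psSet)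
  (f : psmap C' (cofree X W)) (h : psmap W'' W) n (p : part2S f h n) :
  X n := rstar C' n (proj1_sig p).1.

Definition part2R (X : sSet) (C' : comod X) (W W'' : psSet)
  (f : psmap C' (cofree X W)) (h : psmap W'' W) : rspace X :=
  @RSpace X (part2S f h)
    (@SMap X (part2S f h) (@part2_i_fun X C' W W'' f h)
       (@part2_i_nat X C' W W'' f h))
    (@SMap (part2S f h) X (@part2_r_fun X C' W W'' f h)
       (fun _ _ _ _ => erefl)).

(* In a counital comodule (Y,rho) every simplex y satisfies rho y = [y, x] for
   some x in X, unique unless y is the base point: a label of y.  The simplices
   of (Y,rho) * X are the labelled pairs (y, x), and comodule maps preserve
   labels.  So a simplex of the comodule pullback of Y' -> Y <- Y'' is a pair
   (y', y'') over a common simplex of Y with a common label, i.e. a simplex of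
   (Y' * X) x_{Y * X} (Y'' * X), modulo the copy of X where both are base points.
   We prove that this quotient, with its two projections, IS the pullback (the
   isomorphism of the corollary is then the identity); likewise in the cofree
   case, where a simplex of F_{X_+} W'' labelled by x is [w'', x]. *)

From Stdlib Require Import ClassicalEpsilon ProofIrrelevance.
From HB Require Import structures.
From mathcomp Require Import all_boot.

Set Implicit Arguments.
Unset Strict Implicit.
Unset Printing Implicit Defensive.

Definition jointly_injective (P A B : sSet) (p1 : smap P A) (p2 : smap P B) :=
  forall n (q q' : P n), p1 n q = p1 n q' -> p2 n q = p2 n q' -> q = q'.

Section Quotients.
Variables (Z : sSet) (A : forall n, Z n -> Prop).
Arguments A : clear implicits.

Lemma qproj_some n (z : Z n) p : qproj A z = Some p -> proj1_sig p = z.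
Proof. by rewrite /qproj; case: excluded_middle_informative => // a [<-]. Qed.

Lemma qproj_none n (z : Z n) : qproj A z = None -> A n z.
Proof. by rewrite /qproj; case: excluded_middle_informative. Qed.

Lemma qproj_sig n (w : {z : Z n | ~ A n z}) : Some w = qproj A (proj1_sig w).
Proof. by case: w => z h /=; rewrite (qprojN h). Qed.

Lemma qproj_eq n (z z' : Z n) :
  qproj A z = qproj A z' -> (A n z /\ A n z') \/ z = z'.
Proof.
case: (excluded_middle_informative (A n z)) => a.
  by rewrite (qprojA a) => /esym/qproj_none; left.
rewrite (qprojN a); case E: (qproj A z') => [p|] // [e].
by right; rewrite -(qproj_some E) -e.
Qed.

Lemma qmap_qproj (Z' : sSet) (A' : forall n, Z' n -> Prop) (phi : smap Z Z')
  (hphi : forall n z, A n z -> A' n (phi n z)) n (z : Z n) :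
  qmap A' phi (qproj A z) = qproj A' (phi n z).
Proof.
case: (excluded_middle_informative (A n z)) => a.
  by rewrite (qprojA a) /= (qprojA (hphi _ _ a)).
by rewrite (qprojN a).
Qed.

Variable hA : sclosed A.

Section Descent.
Variables (Y : psSet) (phi : smap Z Y).
Hypothesis phiA : forall n z, A n z -> phi n z = pt n.

Definition qdesc_fun n (q : qob A n) : Y n :=
  match q with None => pt n | Some w => phi n (proj1_sig w) end.

Lemma qdesc_qproj n (z : Z n) : qdesc_fun (qproj A z) = phi n z.
Proof.
case: (excluded_middle_informative (A n z)) => a.
  by rewrite (qprojA a) /= phiA.
by rewrite (qprojN a).
Qed.

Lemma qdesc_nat m n (f : dmap m n) (q : quotS hA n) :
  qdesc_fun (sact f q) = sact f (qdesc_fun q).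
Proof.
case: q => [[z h]|] /=; last by rewrite pt_nat.
by rewrite qdesc_qproj // sfun_nat.
Qed.

Definition qdesc : psmap (quotS hA) Y :=
  PSMap (@SMap (quotS hA) Y qdesc_fun qdesc_nat) (fun _ => erefl).

End Descent.

Lemma qdesc_jointly_injective (Y1 Y2 : psSet) (phi1 : smap Z Y1)
  (phi2 : smap Z Y2) (h1 : forall n z, A n z -> phi1 n z = pt n)
  (h2 : forall n z, A n z -> phi2 n z = pt n) :
  (forall n (z z' : Z n), ~ A n z ->
     phi1 n z = phi1 n z' -> phi2 n z = phi2 n z' -> z = z') ->
  (forall n (z : Z n), phi1 n z = pt n -> phi2 n z = pt n -> A n z) ->
  jointly_injective (qdesc h1) (qdesc h2).
Proof.
move=> inj ptA n [w|] [w'|] //= e1 e2.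
- by congr Some; apply: sig_eqP; apply: inj (proj2_sig w) e1 e2.
- by case: (proj2_sig w); apply: ptA.
- by case: (proj2_sig w'); apply: ptA.
Qed.

End Quotients.

Section Smash.
Variable X : sSet.

Lemma smf_qproj (Y Y' : psSet) (phi : psmap Y Y') n (y : Y n) (x : X n) :
  smf phi (qproj (@smashA Y X) (y, x)) = qproj (@smashA Y' X) (phi n y, x).
Proof.
case: (excluded_middle_informative (@smashA Y X n (y, x))) => a.
  rewrite (qprojA a) /= qprojA //; rewrite /smashA /= in a *.
  by rewrite a psm_pt.
by rewrite (qprojN a).
Qed.

Lemma sm_counit_qproj (Y : psSet) n (y : Y n) (x : X n) :
  sm_counit Y X n (qproj (@smashA Y X) (y, x)) = y.
Proof.
case: (excluded_middle_informative (@smashA Y X n (y, x))) => a.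
  by rewrite (qprojA a) /=; rewrite /smashA /= in a.
by rewrite (qprojN a).
Qed.

Lemma smf_id (Y : psSet) n (s : smash Y X n) :
  smf (fun n (y : Y n) => y) s = s.
Proof. by case: s => [[[y x] h]|] //=; rewrite (qprojN h). Qed.

Lemma smf_comp (T P C : psSet) (u : psmap T P) (p : psmap P C) (t : psmap T C) :
  (forall n y, p n (u n y) = t n y) ->
  forall n (s : smash T X n), smf p (smf u s) = smf t s.
Proof. by move=> e n [[[y x] h]|] //=; rewrite smf_qproj e. Qed.

Lemma smf_jointly_injective (P C' C'' : psSet) (p1 : psmap P C')
  (p2 : psmap P C'') :
  jointly_injective p1 p2 ->
  forall n (s s' : smash P X n), smf p1 s = smf p1 s' -> smf p2 s = smf p2 s' ->
    s = s'.
Proof.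
move=> inj n.
have ptinj (q : P n) : p1 n q = pt n -> p2 n q = pt n -> q = pt n.
  by move=> e1 e2; apply: inj; rewrite psm_pt.
case=> [[[q x] h]|]; case=> [[[q' x'] h']|] //=.
- move=> /qproj_eq e1 /qproj_eq e2; congr Some; apply: sig_eqP => /=.
  rewrite /smashA /= in h e1 e2.
  case: e1 => [[a1 a1']|[e1 ex]]; case: e2 => [[a2 a2']|[e2 ex']].
  + by case: h; apply: ptinj.
  + by rewrite ex' (inj _ q q') // a1 a1'.
  + by rewrite ex (inj _ q q') // a2 a2'.
  + by rewrite ex (inj _ q q').
- move=> /qproj_none a1 /qproj_none a2; rewrite /smashA /= in a1 a2.
  by case: h; rewrite /smashA /=; apply: ptinj.
- move=> /esym/qproj_none a1 /esym/qproj_none a2; rewrite /smashA /= in a1 a2.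
  by case: h'; rewrite /smashA /=; apply: ptinj.
Qed.

End Smash.

Section Labels.
Variable X : sSet.

Definition labelled (C : comod X) n (y : C n) (x : X n) : Prop :=
  coact C n y = qproj (@smashA C X) (y, x).
Arguments labelled C {n} y x.

(* Counitality: every simplex other than the base point has a label. *)
Lemma comod_labelled (C : comod X) (HC : is_comod C) n (y : C n) :
  y = pt n \/ exists x, labelled C y x.
Proof.
have ey := HC.1 n y; case E: (coact C n y) ey => [p|] /= ey; last by left.
right; exists (proj1_sig p).2.
by rewrite /labelled E (qproj_sig p) -ey -surjective_pairing.
Qed.

Lemma labelled_unique (C : comod X) n (y : C n) (x x' : X n) :
  y <> pt n -> labelled C y x -> labelled C y x' -> x = x'.
Proof. by rewrite /labelled => ny -> /qproj_eq [[a _]|[]]. Qed.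

Lemma chom_labelled (C D : comod X) (phi : psmap C D) n (y : C n) (x : X n) :
  is_chom phi -> labelled C y x -> labelled D (phi n y) x.
Proof. by move=> hphi ey; rewrite /labelled hphi ey smf_qproj. Qed.

Lemma cofree_labelled (W : psSet) n (w : W n) (x : X n) :
  labelled (cofree X W) (qproj (@smashA W X) (w, x)) x.
Proof. exact: (qmap_qproj (@gco_pt X _ _ (@smashA_closed W X) (sndS W X))). Qed.

Lemma cofree_labelled_eq (W : psSet) n (s : cofree X W n) (x : X n) :
  labelled (cofree X W) s x -> s = qproj (@smashA W X) (sm_counit W X n s, x).
Proof.
case: s => [w|] /=; last by move=> _; rewrite qprojA.
have ew : Some w = qproj (@smashA W X) ((proj1_sig w).1, (proj1_sig w).2).
  by rewrite -surjective_pairing qproj_sig.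
have := cofree_labelled (proj1_sig w).1 (proj1_sig w).2; rewrite -ew => hw hx.
by rewrite (labelled_unique _ hx hw).
Qed.

(* The simplices of (Y,rho) * X are the pairs (y, (y', x)) with rho y = [y', x];
   for a counital comodule, y' = y ... *)
Lemma star_snd (C : comod X) (HC : is_comod C) n (a : starS C n) :
  (proj1_sig a).2.1 = pstar C n a.
Proof.
case: a => [[y [y' x]] h] /=; rewrite /= in h.
have ey := HC.1 n y; case E: (coact C n y) h ey => [p|] h /= ey.
  by rewrite -ey (qproj_some (esym h)).
by rewrite -ey; exact: (qproj_none (esym h)).
Qed.

Lemma star_labelled (C : comod X) (HC : is_comod C) n (a : starS C n) :
  labelled C (pstar C n a) (rstar C n a).
Proof.
rewrite /labelled (proj2_sig a) -(star_snd HC a).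
by case: a => [[y [y' x]] h].
Qed.

Lemma star_ext (C : comod X) (HC : is_comod C) n (a b : starS C n) :
  pstar C n a = pstar C n b -> rstar C n a = rstar C n b -> a = b.
Proof.
have := star_snd HC a; have := star_snd HC b.
case: a => [[y [y' x]] ha]; case: b => [[z [z' u]] hb] /= ez ey eyz exu.
by subst; apply: sig_eqP.
Qed.

End Labels.
Arguments labelled {X} C {n} y x.

(* Since the coaction of a counital comodule sends y to [y, x], applying it
   twice gives [[y, x], x], which is the diagonal: for X_+-comodules in pointed
   simplicial sets coassociativity is a consequence of counitality. *)
Lemma counital_is_comod (X : sSet) (C : comod X) :
  (forall n (y : C n), sm_counit C X n (coact C n y) = y) -> is_comod C.
Proof.
move=> counit; split=> // n y; case E: (coact C n y) => [p|] //=.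
have ey : (proj1_sig p).1 = y by have := counit n y; rewrite E.
by rewrite ey E.
Qed.

Section RetractiveQuotient.
Variables (X : sSet) (R : rspace X).

Lemma modX_labelled n (z : R n) :
  labelled (modX R) (qproj (@imgA X R) z) (rret R n z).
Proof. exact: (qmap_qproj (@gco_pt X R _ (@imgA_closed X R) (rret R))). Qed.

Lemma modX_comod : is_comod (modX R).
Proof.
apply: counital_is_comod => n [w|] //.
by rewrite (qproj_sig w) modX_labelled sm_counit_qproj.
Qed.

Lemma chom_qdesc (C : comod X) (phi : smap R C)
  (phiA : forall n z, @imgA X R n z -> phi n z = pt n) :
  (forall n z, labelled C (phi n z) (rret R n z)) ->
  is_chom (qdesc (@imgA_closed X R) phiA : psmap (modX R) C).
Proof.
move=> hphi n [w|]; last by rewrite /= coact_pt.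
rewrite (qproj_sig w) modX_labelled smf_qproj /= qdesc_qproj //; exact: hphi.
Qed.

End RetractiveQuotient.

Lemma comod_iso_refl (X : sSet) (P : comod X) : comod_iso P P.
Proof.
pose i := PSMap (@SMap P P (fun n y => y) (fun _ _ _ _ => erefl)) (fun _ => erefl).
have hi : is_chom i by move=> n y; rewrite /= smf_id.
by exists i, i.
Qed.

Lemma psmap_of_lifts (T P C' C'' : psSet) (p1 : psmap P C') (p2 : psmap P C'')
  (t1 : psmap T C') (t2 : psmap T C'') :
  jointly_injective p1 p2 ->
  (forall n (z : T n), exists q, p1 n q = t1 n z /\ p2 n q = t2 n z) ->
  exists u : psmap T P,
    (forall n z, p1 n (u n z) = t1 n z) /\ (forall n z, p2 n (u n z) = t2 n z).
Proof.
move=> inj lift.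
pose u_fun n (z : T n) := epsilon (inhabits (pt n))
  (fun q => p1 n q = t1 n z /\ p2 n q = t2 n z).
have uspec n z : p1 n (u_fun n z) = t1 n z /\ p2 n (u_fun n z) = t2 n z.
  exact: (epsilon_spec _ _ (lift n z)).
have unat m n (phi : dmap m n) (z : T n) :
    u_fun m (sact phi z) = sact phi (u_fun n z).
  apply: inj.
    by rewrite (uspec m _).1 sfun_nat (sfun_nat p1) (uspec n z).1.
  by rewrite (uspec m _).2 sfun_nat (sfun_nat p2) (uspec n z).2.
have upt n : u_fun n (pt n) = pt n.
  by apply: inj; rewrite ?(uspec n (pt n)).1 ?(uspec n (pt n)).2 !psm_pt.
by exists (PSMap (SMap u_fun unat) upt); split=> n z; case: (uspec n z).
Qed.

Lemma chom_of_jointly_injective (X : sSet) (T P C' C'' : comod X)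
  (p1 : psmap P C') (p2 : psmap P C'') (t1 : psmap T C') (t2 : psmap T C'')
  (u : psmap T P) :
  is_chom p1 -> is_chom p2 -> jointly_injective p1 p2 ->
  is_chom t1 -> is_chom t2 ->
  (forall n z, p1 n (u n z) = t1 n z) -> (forall n z, p2 n (u n z) = t2 n z) ->
  is_chom u.
Proof.
move=> hp1 hp2 inj ht1 ht2 e1 e2 n z.
apply: (smf_jointly_injective (X := X) inj).
  by rewrite -hp1 e1 ht1 (smf_comp (t := t1)).
by rewrite -hp2 e2 ht2 (smf_comp (t := t2)).
Qed.

Lemma pullback_criterion (X : sSet) (C' C C'' P : comod X)
  (f : psmap C' C) (g : psmap C'' C) (p1 : psmap P C') (p2 : psmap P C'') :
  is_comod P -> is_chom p1 -> is_chom p2 ->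
  (forall n z, f n (p1 n z) = g n (p2 n z)) ->
  jointly_injective p1 p2 ->
  (forall n (y' : C' n) (y'' : C'' n) (x : X n), f n y' = g n y'' ->
     labelled C' y' x -> labelled C'' y'' x ->
     exists q : P n, p1 n q = y' /\ p2 n q = y'') ->
  is_comod_pullback f g p1 p2.
Proof.
move=> HP hp1 hp2 hcomm inj lift; split=> // T t1 t2 HT ht1 ht2 htcomm.
have lift_T n (z : T n) : exists q, p1 n q = t1 n z /\ p2 n q = t2 n z.
  case: (comod_labelled HT z) => [-> | [x hx]].
    by exists (pt n); rewrite !psm_pt.
  by apply: lift (htcomm n z) (chom_labelled ht1 hx) (chom_labelled ht2 hx).
have [u [e1 e2]] := psmap_of_lifts inj lift_T.
exists u; split => //.
- exact: (chom_of_jointly_injective hp1 hp2 inj ht1 ht2 e1 e2).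
- by move=> u' _ e1' e2' n z; apply: inj; [rewrite e1 e1' | rewrite e2 e2'].
Qed.

Section InnerPullback.
Variables (X : sSet) (C' C C'' : comod X) (f : psmap C' C) (g : psmap C'' C).
Hypotheses (H' : is_comod C') (H'' : is_comod C'').

Definition in1 : smap (innerS f g) C' :=
  SMap (fun n (w : innerS f g n) => pstar C' n (proj1_sig w).1)
       (fun _ _ _ _ => erefl).

Definition in2 : smap (innerS f g) C'' :=
  SMap (fun n (w : innerS f g n) => pstar C'' n (proj1_sig w).2)
       (fun _ _ _ _ => erefl).

Lemma inner_label n (w : innerS f g n) :
  rstar C'' n (proj1_sig w).2 = rstar C' n (proj1_sig w).1.
Proof. by have := proj2_sig w => /(f_equal (fun t => t.2.2)). Qed.

Lemma inner_ext n (w w' : innerS f g n) :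
  in1 n w = in1 n w' -> in2 n w = in2 n w' ->
  rstar C' n (proj1_sig w).1 = rstar C' n (proj1_sig w').1 -> w = w'.
Proof.
move=> e1 e2 ex; apply: sig_eqP; rewrite [proj1_sig w]surjective_pairing.
rewrite [proj1_sig w']surjective_pairing (star_ext H' e1 ex).
by rewrite (star_ext H'' e2) // !inner_label.
Qed.

Lemma inner_img n (w : innerS f g n) :
  in1 n w = pt n -> in2 n w = pt n -> @imgA X (innerR f g) n w.
Proof.
by move=> e1 e2; exists (rstar C' n (proj1_sig w).1); apply: inner_ext.
Qed.

Lemma in1_pt n z : @imgA X (innerR f g) n z -> in1 n z = pt n.
Proof. by move=> [x <-]. Qed.

Lemma in2_pt n z : @imgA X (innerR f g) n z -> in2 n z = pt n.
Proof. by move=> [x <-]. Qed.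

Definition P1 : psmap (modX (innerR f g)) C' :=
  qdesc (@imgA_closed X (innerR f g)) in1_pt.

Definition P2 : psmap (modX (innerR f g)) C'' :=
  qdesc (@imgA_closed X (innerR f g)) in2_pt.

(* Off the copy of X one of y', y'' is not the base point, and its label is
   unique; hence the two legs are jointly injective. *)
Lemma P_jointly_injective : jointly_injective P1 P2.
Proof.
apply: qdesc_jointly_injective (fun n w => @inner_img n w) => n w w' nw e1 e2.
apply: inner_ext => //.
case: (excluded_middle_informative (in1 n w = pt n)) => [p1w | np1w].
  have np2w : in2 n w <> pt n by move=> p2w; case: nw; apply: inner_img.
  rewrite -!inner_label; apply: (labelled_unique np2w).
    exact: star_labelled.
  by rewrite e2; apply: star_labelled.
apply: (labelled_unique np1w); first exact: star_labelled.
by rewrite e1; apply: star_labelled.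
Qed.

(* The first statement of the corollary; the legs are comodule maps because
   (Y' * X) and (Y'' * X) consist of labelled simplices. *)
Lemma inner_pullback : is_comod_pullback f g P1 P2.
Proof.
apply: pullback_criterion P_jointly_injective _.
- exact: modX_comod.
- by apply: chom_qdesc => n w; apply: star_labelled.
- apply: chom_qdesc => n w.
  by rewrite /= /inner_r_fun -inner_label; apply: star_labelled.
- move=> n [w|]; last by rewrite /= !psm_pt.
  by have := proj2_sig (proj1_sig w) => /(f_equal fst).
- move=> n y' y'' x e h1 h2.
  pose a : starS C' n := exist _ (y', (y', x)) h1.
  pose b : starS C'' n := exist _ (y'', (y'', x)) h2.
  have hw : starfun f n a = starfun g n b by rewrite /= /starfun_fun /= e.
  exists (qproj (@imgA X (innerR f g)) (exist _ (a, b) hw)).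
  by rewrite /P1 /P2 /= !qdesc_qproj //; [exact: in2_pt | exact: in1_pt].
Qed.

End InnerPullback.

Lemma cofree_map_qproj (X : sSet) (W W'' : psSet) (h : psmap W'' W) n
  (w : W'' n) (x : X n) :
  cofree_map X h n (qproj (@smashA W'' X) (w, x)) = qproj (@smashA W X) (h n w, x).
Proof. exact: (qmap_qproj (@prodmap_pt W'' W X h)). Qed.

Section CofreePullback.
Variables (X : sSet) (C' : comod X) (W W'' : psSet).
Variables (f : psmap C' (cofree X W)) (h : psmap W'' W).
Hypotheses (H' : is_comod C') (hf : is_chom f).

Definition pr1 : smap (part2S f h) C' :=
  SMap (fun n (w : part2S f h n) => pstar C' n (proj1_sig w).1)
       (fun _ _ _ _ => erefl).

Definition pr2_fun n (w : part2S f h n) : cofree X W'' n :=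
  qproj (@smashA W'' X) ((proj1_sig w).2, rstar C' n (proj1_sig w).1).

Lemma pr2_nat m n (phi : dmap m n) (w : part2S f h n) :
  pr2_fun (sact phi w) = sact phi (pr2_fun w).
Proof. exact: (qproj_nat (@smashA_closed W'' X) phi (_, _)). Qed.

Definition pr2 : smap (part2S f h) (cofree X W'') := SMap pr2_fun pr2_nat.

Lemma part2_ext n (w w' : part2S f h n) :
  pr1 n w = pr1 n w' -> (proj1_sig w).2 = (proj1_sig w').2 ->
  rstar C' n (proj1_sig w).1 = rstar C' n (proj1_sig w').1 -> w = w'.
Proof.
move=> e1 e2 ex; apply: sig_eqP.
by rewrite [proj1_sig w]surjective_pairing [proj1_sig w']surjective_pairing
  (star_ext H' e1 ex) e2.
Qed.

Lemma part2_img n (w : part2S f h n) :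
  pr1 n w = pt n -> (proj1_sig w).2 = pt n -> @imgA X (part2R f h) n w.
Proof.
by move=> e1 e2; exists (rstar C' n (proj1_sig w).1); apply: part2_ext.
Qed.

Lemma pr1_pt n z : @imgA X (part2R f h) n z -> pr1 n z = pt n.
Proof. by move=> [x <-]. Qed.

Lemma pr2_pt n z : @imgA X (part2R f h) n z -> pr2 n z = pt n.
Proof. by move=> [x <-]; rewrite /= /pr2_fun /= qprojA. Qed.

Definition Q1 : psmap (modX (part2R f h)) C' :=
  qdesc (@imgA_closed X (part2R f h)) pr1_pt.

Definition Q2 : psmap (modX (part2R f h)) (cofree X W'') :=
  qdesc (@imgA_closed X (part2R f h)) pr2_pt.

(* Off the copy of X either y or w'' is not the base point; in the first case
   the label is unique, in the second it is recorded by [w'', x]. *)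
Lemma Q_jointly_injective : jointly_injective Q1 Q2.
Proof.
apply: qdesc_jointly_injective => [n w w' nw e1 | n w e1 /qproj_none e2].
  rewrite /= /pr2_fun => /qproj_eq [[a a'] | [e2 ex]].
    rewrite /smashA /= in a a'.
    apply: part2_ext; rewrite ?a ?a' //.
    have np1w : pr1 n w <> pt n by move=> p1w; case: nw; apply: part2_img.
    apply: (labelled_unique np1w); first exact: star_labelled.
    by rewrite e1; apply: star_labelled.
  exact: part2_ext.
exact: part2_img.
Qed.

(* Since f is a comodule map, f y = [eps (f y), x] for every labelled (y, x). *)
Lemma f_star n (a : starS C' n) :
  f n (pstar C' n a) =
  qproj (@smashA W X) (sm_counit W X n (f n (pstar C' n a)), rstar C' n a).
Proof.
by apply: cofree_labelled_eq; apply: chom_labelled hf _; apply: star_labelled.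
Qed.

Lemma cofree_pullback : is_comod_pullback f (cofree_map X h) Q1 Q2.
Proof.
apply: pullback_criterion Q_jointly_injective _.
- exact: modX_comod.
- by apply: chom_qdesc => n w; apply: star_labelled.
- by apply: chom_qdesc => n w; apply: cofree_labelled.
- move=> n [w|]; last by rewrite /= !psm_pt.
  rewrite [Q1 n _]/= [Q2 n _]/= /pr2_fun cofree_map_qproj f_star.
  by rewrite [sm_counit W X n _](proj2_sig (proj1_sig w)).
- move=> n y' y'' x e h1 h2.
  have ey'' := cofree_labelled_eq h2.
  pose a : starS C' n := exist _ (y', (y', x)) h1.
  have hw : wmap f n a = h n (sm_counit W'' X n y'').
    rewrite /= /wmap_fun /= e {1}ey'' cofree_map_qproj; exact: sm_counit_qproj.
  exists (qproj (@imgA X (part2R f h)) (exist _ (a, _) hw)).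
  by rewrite /Q1 /Q2 /= !qdesc_qproj //; [exact: pr2_pt | exact: pr1_pt].
Qed.

End CofreePullback.

Theorem corollary3p3 (X : sSet) :
  (forall (C' C C'' : comod X) (f : psmap C' C) (g : psmap C'' C),
      is_comod C' -> is_comod C -> is_comod C'' ->
      is_chom f -> is_chom g ->
      exists (P : comod X) (p1 : psmap P C') (p2 : psmap P C''),
        [/\ is_comod_pullback f g p1 p2,
            is_comod (modX (innerR f g)) &
            comod_iso P (modX (innerR f g))])
  /\
  (forall (C' : comod X) (W W'' : psSet) (f : psmap C' (cofree X W))
          (h : psmap W'' W),
      is_comod C' -> is_chom f ->
      exists (P : comod X) (p1 : psmap P C') (p2 : psmap P (cofree X W'')),
        [/\ is_comod_pullback f (cofree_map X h) p1 p2,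
            is_comod (modX (part2R f h)) &
            comod_iso P (modX (part2R f h))]).
Proof.
split.
- move=> C' C C'' f g H' _ H'' _ _.
  exists (modX (innerR f g)), (P1 f g), (P2 f g); split.
  + exact: inner_pullback.
  + exact: modX_comod.
  + exact: comod_iso_refl.
- move=> C' W W'' f h H' hf.
  exists (modX (part2R f h)), (Q1 f h), (Q2 f h); split.
  + exact: cofree_pullback.
  + exact: modX_comod.
  + exact: comod_iso_refl.
Qed.
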